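(* Let $G=(V,E)$ be a finite graph, $f$ a weight function of one of the two types described in the context (with associated integer $k$), $g(S)=f(S)/|S|$, $\epsilon\ge 0$, and let $S^*$ be a nonempty vertex set maximizing $g$ over nonempty subsets of $V$. Run the local-peeling-optimization algorithm described in the context, and let $u_i$ be the first vertex of $S^*$ that the algorithm removes. Then $u_i$ is not removed during a local trimming step (i.e., it is not in any set $U_2$); it is removed in a main peeling step (in some set $U_1$).
   Context: Let $G=(V,E)$ be a graph; $E[S]$ denotes the edges with both endpoints in $S$. The weight function $f$ is either (Type A, $k=2$) $f(S)=\sum_{u_i\in S}a_i+\sum_{(u_i,u_j)\in E[S]}c_{ij}$ with fixed $a_i\ge 0$, $c_{ij}\ge 0$, or (Type B, $k\ge3$) $f(S)=$ number of $k$-cliques in the induced subgraph $G[S]$. The density is $g(S)=f(S)/|S|$ for nonempty $S$, and the peeling weight of $u\in S$ is $w_u(S)=f(S)-f(S\setminus\{u\})$. Local-peeling-optimization algorithm with parameter $\epsilon\ge0$: set $S_0=V$, $\tau_{\max}=0$, $i=1$. While $S_{i-1}\neq\emptyset$: (1) set $\tau_{\max}\leftarrow\max\{\tau_{\max}, g(S_{i-1})/(k(1+\epsilon))\}$ and $\tau_1=\max\{\tau_{\max},k(1+\epsilon)g(S_{i-1})\}$; (2) main peeling step: $U_1=\{u\in S_{i-1}: w_u(S_{i-1})\le\tau_1\}$, $S_i\leftarrow S_{i-1}\setminus U_1$; (3) local trimming: while there exists $u\in S_i$ with $w_u(S_i)<g(S_i)$, set $\tau_2=\max\{\tau_{\max},g(S_i)\}$,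 $U_2=\{u\in S_i: w_u(S_i)<\tau_2\}$, and $S_i\leftarrow S_i\setminus U_2$; (4) increase $i$ by one. The output is $\arg\max_{S_i}g(S_i)$ over the nonempty sets produced. *)

From HB Require Import structures.
From mathcomp Require Import all_boot all_order all_algebra.
Set Implicit Arguments. Unset Strict Implicit. Unset Printing Implicit Defensive.
Import Order.TTheory GRing.Theory Num.Theory.
Local Open Scope ring_scope.

Section Peeling.
Variables (R : realFieldType) (T : finType).

Definition is_clique (e : rel T) (C : {set T}) : bool :=
  [forall x in C, forall y in C, (x != y) ==> e x y].

Definition is_edge (e : rel T) (E : {set T}) : bool :=
  (#|E| == 2)%N && is_clique e E.

(* The two types of weight functions.
   TypeA a c : f(S) = sum_{u in S} a u + sum_{edges E of G[S]} c E   (k = 2)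
   TypeB k   : f(S) = number of k-cliques of G[S]                    (k >= 3) *)
Inductive wfun :=
  | TypeA of (T -> R) & ({set T} -> R)
  | TypeB of nat.

Definition wk (w : wfun) : nat :=
  match w with TypeA _ _ => 2%N | TypeB k => k end.

Definition valid_wfun (e : rel T) (w : wfun) : Prop :=
  match w with
  | TypeA a c => (forall u, 0 <= a u) /\ (forall E, is_edge e E -> 0 <= c E)
  | TypeB k => (3 <= k)%N
  end.

Definition fw (e : rel T) (w : wfun) (S : {set T}) : R :=
  match w with
  | TypeA a c => \sum_(u in S) a u + \sum_(E : {set T} | is_edge e E && (E \subset S)) c E
  | TypeB k => #|[set C : {set T} | (C \subset S) && (#|C| == k) && is_clique e C]|%:R
  end.

(* density g(S) = f(S)/|S| (only meaningful for nonempty S) *)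
Definition gw (e : rel T) (w : wfun) (S : {set T}) : R := fw e w S / #|S|%:R.

Definition pw (e : rel T) (w : wfun) (u : T) (S : {set T}) : R :=
  fw e w S - fw e w (S :\ u).

(* An event of the algorithm: (true, U1) for a main peeling step,
   (false, U2) for a local trimming step. *)
Definition event := (bool * {set T})%type.

Fixpoint trim (e : rel T) (w : wfun) (fuel : nat) (S : {set T}) (tmax : R)
  : seq event * {set T} :=
  match fuel with
  | 0%N => ([::], S)
  | n.+1 =>
    if [exists u in S, pw e w u S < gw e w S] then
      let U2 := [set u in S | pw e w u S < Num.max tmax (gw e w S)] in
      let r := trim e w n (S :\: U2) tmax in
      ((false, U2) :: r.1, r.2)
    else ([::], S)
  end.

(* Main loop; each iteration removes at least one vertex, so fuel #|T|.+1
   for both loops is sufficient for the run to reach the empty set. *)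
Fixpoint run (e : rel T) (w : wfun) (eps : R) (fuel : nat) (S : {set T}) (tmax : R)
  : seq event :=
  match fuel with
  | 0%N => [::]
  | n.+1 =>
    if S == set0 then [::] else
    let kk := (wk w)%:R * (1 + eps) in
    let tmax' := Num.max tmax (gw e w S / kk) in
    let t1 := Num.max tmax' (kk * gw e w S) in
    let U1 := [set u in S | pw e w u S <= t1] in
    let r := trim e w #|T|.+1 (S :\: U1) tmax' in
    (true, U1) :: r.1 ++ run e w eps n r.2 tmax'
  end.

Definition lpo_events (e : rel T) (w : wfun) (eps : R) : seq event :=
  run e w eps #|T|.+1 [set: T] 0.

End Peeling.

(* The weight f(S) is a nonnegative combination of sums over the vertex sets X
   contained in S (vertices, edges, k-cliques); hence the peeling weight
   w_u(S) is monotone in S, and sum_{u in S} w_u(S) <= k f(S) since each X is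
   counted |X| <= k times.  Maximality of Sstar gives w_u(Sstar) >= g(Sstar)
   for u in Sstar, so w_u(S) >= g(Sstar) whenever Sstar is contained in S.
   As long as Sstar survives, tau_max and g(S_i) stay at most g(Sstar), so the
   strict threshold of local trimming spares Sstar, while by averaging every
   main peeling step removes at least one vertex. *)

From HB Require Import structures.
From mathcomp Require Import all_boot all_order all_algebra.
Import Order.TTheory GRing.Theory Num.Theory.
Local Open Scope ring_scope.
Set Implicit Arguments. Unset Strict Implicit. Unset Printing Implicit Defensive.

Section SubsetSum.
Variables (R : realFieldType) (T : finType) (P : pred {set T}) (F : {set T} -> R).

Definition subset_sum (S : {set T}) : R := \sum_(X | P X && (X \subset S)) F X.

Lemma subset_sum_set0 : ~~ P set0 -> subset_sum set0 = 0.
Proof.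
move=> P0; rewrite /subset_sum big1 // => X /andP[PX]; rewrite subset0 => /eqP X0.
by move: PX; rewrite X0 (negbTE P0).
Qed.

Lemma subset_sum_marginal (S : {set T}) u :
  subset_sum S - subset_sum (S :\ u) =
  \sum_(X | P X && (X \subset S) && (u \in X)) F X.
Proof.
rewrite /subset_sum (bigID (fun X : {set T} => u \in X) (fun X => P X && (X \subset S))) /=.
have -> : \sum_(X | P X && (X \subset S :\ u)) F X =
          \sum_(X | P X && (X \subset S) && (u \notin X)) F X.
  by apply: eq_bigl => X; rewrite subsetD1 andbA.
by rewrite addrK.
Qed.

Lemma sum_subset_sum_marginal (S : {set T}) :
  \sum_(u in S) (subset_sum S - subset_sum (S :\ u)) =
  \sum_(X | P X && (X \subset S)) (#|X|%:R * F X).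
Proof.
under eq_bigr => u _ do rewrite subset_sum_marginal big_mkcond.
rewrite exchange_big /= [RHS]big_mkcond /=; apply: eq_bigr => X _.
have [/andP[_ sXS]|_] := boolP (P X && (X \subset S)); last by rewrite big1.
rewrite mulr_natl -sumr_const big_mkcond [RHS]big_mkcond /=.
apply: eq_bigr => u _; have [uX|] := boolP (u \in X); last by case: (u \in S).
by rewrite (subsetP sXS).
Qed.

Hypothesis F_ge0 : forall X, P X -> 0 <= F X.

Lemma subset_sum_ge0 (S : {set T}) : 0 <= subset_sum S.
Proof. by apply: sumr_ge0 => X /andP[/F_ge0]. Qed.

Lemma subset_sum_marginal_mono (S1 S2 : {set T}) u : S1 \subset S2 ->
  subset_sum S1 - subset_sum (S1 :\ u) <= subset_sum S2 - subset_sum (S2 :\ u).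
Proof.
move=> sS12; rewrite !subset_sum_marginal.
rewrite [leRHS](bigID (fun X : {set T} => X \subset S1)) /=.
have -> : \sum_(X | P X && (X \subset S2) && (u \in X) && (X \subset S1)) F X =
          \sum_(X | P X && (X \subset S1) && (u \in X)) F X.
  apply: eq_bigl => X; have [sXS1|_] := boolP (X \subset S1).
    by rewrite (subset_trans sXS1 sS12) !andbT.
  by rewrite !andbF.
by rewrite lerDl; apply: sumr_ge0 => X /andP[/andP[/andP[/F_ge0]]].
Qed.

Lemma sum_subset_sum_marginal_le k (S : {set T}) :
  (forall X, P X -> #|X| <= k)%N ->
  \sum_(u in S) (subset_sum S - subset_sum (S :\ u)) <= k%:R * subset_sum S.
Proof.
move=> card_le; rewrite sum_subset_sum_marginal mulr_sumr.
apply: ler_sum => X /andP[PX _].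
by rewrite ler_wpM2r ?F_ge0 // ler_nat card_le.
Qed.

End SubsetSum.

Section Weight.
Variables (R : realFieldType) (T : finType) (e : rel T) (w : wfun R T).
Hypothesis w_valid : valid_wfun e w.

Lemma fw_TypeA (a : T -> R) (c : {set T} -> R) (S : {set T}) :
  fw e (TypeA a c) S = \sum_(u in S) a u + subset_sum (is_edge e) c S.
Proof. by []. Qed.

Lemma fw_TypeB k (S : {set T}) :
  fw e (@TypeB R T k) S =
  subset_sum (fun C => (#|C| == k) && is_clique e C) (fun=> 1) S.
Proof.
rewrite /fw /subset_sum -sumr_const; apply: eq_bigl => C.
by rewrite inE -andbA andbC.
Qed.

Lemma pw_TypeA (a : T -> R) (c : {set T} -> R) (S : {set T}) u : u \in S ->
  pw e (TypeA a c) u S =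
  a u + (subset_sum (is_edge e) c S - subset_sum (is_edge e) c (S :\ u)).
Proof. by move=> uS; rewrite /pw !fw_TypeA (big_setD1 _ uS) opprD addrACA addrK. Qed.

Lemma fw_set0 : fw e w set0 = 0.
Proof.
case: w w_valid => [a c _ | k k_ge3].
  by rewrite fw_TypeA big_set0 subset_sum_set0 ?addr0 // /is_edge cards0.
by rewrite fw_TypeB subset_sum_set0 // cards0; case: k k_ge3.
Qed.

Lemma fw_ge0 (S : {set T}) : 0 <= fw e w S.
Proof.
case: w w_valid => [a c [a_ge0 c_ge0] | k _]; last exact: ler0n.
by rewrite fw_TypeA addr_ge0 ?subset_sum_ge0 // sumr_ge0.
Qed.

Lemma gw_ge0 (S : {set T}) : 0 <= gw e w S.
Proof. by rewrite divr_ge0 ?fw_ge0. Qed.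

Lemma pw_le_subset (S1 S2 : {set T}) u : u \in S1 -> S1 \subset S2 ->
  pw e w u S1 <= pw e w u S2.
Proof.
move=> uS1 sS12; case: w w_valid => [a c [_ c_ge0] | k _].
  rewrite !pw_TypeA ?(subsetP sS12) // lerD2l.
  exact: subset_sum_marginal_mono.
by rewrite /pw !fw_TypeB subset_sum_marginal_mono.
Qed.

Lemma sum_pw_le (S : {set T}) : \sum_(u in S) pw e w u S <= (wk w)%:R * fw e w S.
Proof.
case: w w_valid => [a c [a_ge0 c_ge0] | k _]; last first.
  under eq_bigr => u _ do rewrite /pw !fw_TypeB.
  by rewrite fw_TypeB; apply: sum_subset_sum_marginal_le => // X /andP[/eqP ->].
under eq_bigr => u uS do rewrite pw_TypeA //.
rewrite big_split mulrDr lerD //.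
  by rewrite ler_peMl ?sumr_ge0 ?ler1n.
by apply: sum_subset_sum_marginal_le => // X /andP[/eqP ->].
Qed.

Lemma wk_gt0 : (0 < wk w)%N.
Proof. by case: w w_valid => //= k; apply: leq_trans. Qed.

Lemma exists_pw_le (S : {set T}) (c : R) : S != set0 -> (wk w)%:R <= c ->
  exists2 u, u \in S & pw e w u S <= c * gw e w S.
Proof.
move=> S_neq0 wk_le_c.
have [/exists_inP //|/exists_inPn pw_gt] :=
  boolP [exists u in S, pw e w u S <= c * gw e w S].
have [u uS] := set0Pn _ S_neq0.
have card_neq0 : #|S|%:R != 0 :> R by rewrite pnatr_eq0 cards_eq0.
have : \sum_(v in S) c * gw e w S < \sum_(v in S) pw e w v S.
  apply: ltr_sum => [|v vS]; last by rewrite ltNge pw_gt.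
  by apply/hasP; exists u; rewrite ?mem_index_enum.
rewrite ltNge => /negP; case; apply: le_trans (sum_pw_le S) _.
by rewrite sumr_const -[_ *+ #|S|]mulr_natr -mulrA /gw divfK // ler_wpM2r ?fw_ge0.
Qed.

End Weight.

Section Densest.
Variables (R : realFieldType) (T : finType) (e : rel T) (w : wfun R T).
Hypothesis w_valid : valid_wfun e w.
Variable Sstar : {set T}.
Hypothesis Sstar_max : forall S : {set T}, S != set0 -> gw e w S <= gw e w Sstar.

Local Notation gstar := (gw e w Sstar).

Lemma gw_le_max (S : {set T}) : gw e w S <= gstar.
Proof.
have [->|/Sstar_max //] := eqVneq S set0.
by rewrite /gw cards0 invr0 mulr0 gw_ge0.
Qed.

Lemma fw_le_max (S : {set T}) : fw e w S <= gstar * #|S|%:R.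
Proof.
have [->|S_neq0] := eqVneq S set0; first by rewrite fw_set0 // cards0 mulr0.
by rewrite -ler_pdivrMr ?ltr0n ?card_gt0 // Sstar_max.
Qed.

Lemma pw_ge_max (u : T) : u \in Sstar -> gstar <= pw e w u Sstar.
Proof.
move=> uS; have card_neq0 : #|Sstar|%:R != 0 :> R.
  by rewrite pnatr_eq0 cards_eq0; apply/set0Pn; exists u.
rewrite /pw -{1}[fw e w Sstar](divfK card_neq0) -/gstar (cardsD1 u) uS natrD.
by rewrite mulrDr mulr1 -addrA lerDl subr_ge0 fw_le_max.
Qed.

Lemma pw_ge_max_supset (S : {set T}) u : Sstar \subset S -> u \in Sstar ->
  gstar <= pw e w u S.
Proof. by move=> sSstarS uS; rewrite (le_trans (pw_ge_max uS)) ?pw_le_subset. Qed.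

End Densest.

Section FirstHit.
Variables (T : finType) (A : {set T}).

Definition first_hit_by_peeling (evs : seq (event T)) : Prop :=
  exists i : nat,
    [/\ (i < size evs)%N,
        (nth (true, set0) evs i).1 = true,
        ~~ [disjoint (nth (true, set0) evs i).2 & A] &
        forall j : nat, (j < i)%N -> [disjoint (nth (true, set0) evs j).2 & A]].

Lemma first_hit_by_peeling_cons (ev : event T) evs :
  [disjoint ev.2 & A] -> first_hit_by_peeling evs ->
  first_hit_by_peeling (ev :: evs).
Proof.
move=> ev_dis [i [lti peel hit before]].
by exists i.+1; split=> // -[|j] //; rewrite ltnS; apply: before.
Qed.

Lemma first_hit_by_peeling_cat (evs1 evs2 : seq (event T)) :
  all (fun ev : event T => [disjoint ev.2 & A]) evs1 -> first_hit_by_peeling evs2 ->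
  first_hit_by_peeling (evs1 ++ evs2).
Proof.
elim: evs1 => [//|ev evs1 IH] /= /andP[ev_dis evs1_dis] hit2.
exact/first_hit_by_peeling_cons/IH.
Qed.

End FirstHit.

Section Algorithm.
Variables (R : realFieldType) (T : finType) (e : rel T) (w : wfun R T).
Hypothesis w_valid : valid_wfun e w.
Variables (eps : R) (Sstar : {set T}).
Hypothesis eps_ge0 : 0 <= eps.
Hypothesis Sstar_neq0 : Sstar != set0.
Hypothesis Sstar_max : forall S : {set T}, S != set0 -> gw e w S <= gw e w Sstar.

Local Notation gstar := (gw e w Sstar).
Local Notation kk := ((wk w)%:R * (1 + eps)).

Lemma trim_subset n (S : {set T}) tmax : (trim e w n S tmax).2 \subset S.
Proof.
elim: n S => [|n IH] S /=; first exact: subxx.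
case: ifP => _ //=; exact: subset_trans (IH _) (subsetDl _ _).
Qed.

Lemma trimmed_disjoint (S : {set T}) tmax : Sstar \subset S -> tmax <= gstar ->
  [disjoint [set u in S | pw e w u S < Num.max tmax (gw e w S)] & Sstar].
Proof.
move=> sSstarS tmax_le; rewrite disjoint_sym disjoints_subset.
apply/subsetP => u uSstar; rewrite !inE negb_and -leNgt ge_max orbC.
by rewrite !(le_trans _ (pw_ge_max_supset w_valid Sstar_max sSstarS uSstar)) ?gw_le_max.
Qed.

Lemma trim_keeps_densest n (S : {set T}) tmax : Sstar \subset S -> tmax <= gstar ->
  all (fun ev : event T => [disjoint ev.2 & Sstar]) (trim e w n S tmax).1 &&
  (Sstar \subset (trim e w n S tmax).2).
Proof.
elim: n S => [|n IH] S sSstarS tmax_le /=; first by rewrite sSstarS.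
case: ifP => _ /=; last by rewrite sSstarS.
have U2_dis := trimmed_disjoint sSstarS tmax_le.
by rewrite U2_dis IH // subsetD sSstarS disjoint_sym.
Qed.

Lemma peel_tmax_le (S : {set T}) tmax : tmax <= gstar ->
  Num.max tmax (gw e w S / kk) <= gstar.
Proof.
move=> tmax_le; rewrite ge_max tmax_le (le_trans _ (gw_le_max w_valid Sstar_max S)) //.
have kk_ge1 : 1 <= kk by rewrite mulr_ege1 ?lerDl // ler1n (wk_gt0 w_valid).
by rewrite ler_pdivrMr ?(lt_le_trans ltr01) // ler_peMr ?gw_ge0.
Qed.

Lemma card_peeled_lt (S : {set T}) t : S != set0 -> kk * gw e w S <= t ->
  (#|S :\: [set u in S | (pw e w u S <= t)%R]| < #|S|)%N.
Proof.
move=> S_neq0 t_ge; have wk_le_kk : (wk w)%:R <= kk by rewrite ler_peMr ?lerDl.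
have [u uS pw_le] := exists_pw_le w_valid S_neq0 wk_le_kk.
apply/proper_card/properP; split; first exact: subsetDl.
by exists u; rewrite // !inE uS /= (le_trans pw_le t_ge).
Qed.

Lemma run_first_hit_by_peeling n (S : {set T}) tmax :
  Sstar \subset S -> tmax <= gstar -> (#|S| < n)%N ->
  first_hit_by_peeling Sstar (run e w eps n S tmax).
Proof.
elim: n S tmax => [//|n IH] S tmax sSstarS tmax_le card_lt; cbn [run].
have S_neq0 : S != set0.
  by apply: contraNneq Sstar_neq0 => S0; rewrite -subset0 -S0.
rewrite (negbTE S_neq0).
set tmax' := Num.max tmax _; set U1 := [set u in S | _].
have [U1_dis|U1_hit] := boolP [disjoint U1 & Sstar]; last by exists 0%N.
have sSstarS1 : Sstar \subset S :\: U1 by rewrite subsetD sSstarS disjoint_sym.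
have tmax'_le : tmax' <= gstar := peel_tmax_le S tmax_le.
have /andP[trim_dis sSstar_r] := trim_keeps_densest #|T|.+1 sSstarS1 tmax'_le.
rewrite -cat_cons; apply: first_hit_by_peeling_cat; first by rewrite /= U1_dis trim_dis.
apply: IH => //; apply: leq_ltn_trans (subset_leq_card (trim_subset _ _ _)) _.
rewrite -ltnS (leq_trans _ card_lt) // ltnS.
by apply: card_peeled_lt; rewrite ?le_max ?lexx ?orbT.
Qed.

End Algorithm.

Theorem lemma5p4 (R : realFieldType) (T : finType) (e : rel T)
  (e_sym : symmetric e) (e_irr : irreflexive e)
  (w : wfun R T) (w_valid : valid_wfun e w)
  (eps : R) (eps_ge0 : 0 <= eps)
  (Sstar : {set T}) (Sstar_ne : Sstar != set0)
  (Sstar_max : forall S : {set T}, S != set0 -> gw e w S <= gw e w Sstar) :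
  let evs := lpo_events e w eps in
  exists i : nat,
    [/\ (i < size evs)%N,
        (nth (true, set0) evs i).1 = true,
        ~~ [disjoint (nth (true, set0) evs i).2 & Sstar] &
        forall j : nat, (j < i)%N -> [disjoint (nth (true, set0) evs j).2 & Sstar]].
Proof.
apply: (run_first_hit_by_peeling w_valid eps_ge0 Sstar_ne Sstar_max).
- exact: subsetT.
- exact: gw_ge0.
- by rewrite cardsT.
Qed.
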